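(* Let $\lambda_k\coloneqq-1/k+ik$ for $k\in\mathbb{N}$, and let $A$ be the diagonal operator on $\ell^2$ given by $A(\zeta_k)_{k\in\mathbb{N}}=(\lambda_k\zeta_k)_{k\in\mathbb{N}}$ with domain $D(A)=\{(\zeta_k)\in\ell^2:(\lambda_k\zeta_k)\in\ell^2\}$. Then $A$ generates a polynomially stable $C_0$-semigroup with parameter $\beta=1$, and for every $\alpha>0$, \[ \liminf_{t\to\infty}t^{\alpha/3}\big\|e^{A^{-1}t}(-A)^{-\alpha}\big\|\ge\frac{1}{2^{\alpha/2}}\Big(\frac{\alpha}{3e}\Big)^{\alpha/3}. \]
   Context: A $C_0$-semigroup $(e^{At})_{t\ge0}$ on a Hilbert space is called polynomially stable with parameter $\beta>0$ if it is bounded and there exist $M,t_0>0$ with $\|e^{At}(I-A)^{-1}\|\le M t^{-1/\beta}$ for all $t\ge t_0$. For this diagonal operator, $e^{A^{-1}t}(-A)^{-\alpha}$ is the diagonal operator with entries $e^{t/\lambda_k}(-\lambda_k)^{-\alpha}$ (principal branch). *)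

From Stdlib Require Import Reals Lra.
From Coquelicot Require Import Coquelicot.
Open Scope R_scope.

(** Sequences indexed by nat; index n stands for k = n+1 in the paper. *)
Definition seqC := nat -> C.
Definition op := seqC -> seqC.

Definition cexp (z : C) : C :=
  (exp (fst z) * cos (snd z), exp (fst z) * sin (snd z)).

Definition Arg (z : C) : R :=
  let x := fst z in let y := snd z in
  match Rlt_dec 0 x with
  | left _ => atan (y / x)
  | right _ =>
    match Rlt_dec x 0 with
    | left _ => match Rle_dec 0 y with
                | left _ => atan (y / x) + PI
                | right _ => atan (y / x) - PI end
    | right _ => match Rlt_dec 0 y with
                 | left _ => PI / 2
                 | right _ => match Rlt_dec y 0 with
                              | left _ => - (PI / 2)
                              | right _ => 0 end end
    end
  end.

(** principal branch z^w = exp(w Log z), w real, z <> 0 *)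
Definition cpowR (z : C) (w : R) : C :=
  cexp (w * ln (Cmod z), w * Arg z).

Definition in_l2 (x : seqC) : Prop := ex_series (fun n => (Cmod (x n)) ^ 2).
Definition l2norm (x : seqC) : R := sqrt (Series (fun n => (Cmod (x n)) ^ 2)).
Definition seq_sub (x y : seqC) : seqC := fun n => Cminus (x n) (y n).
Definition seq_scal (c : R) (x : seqC) : seqC := fun n => Cmult (RtoC c) (x n).

Definition opnorm (T : op) : Rbar :=
  Lub_Rbar (fun r => exists x, in_l2 x /\ l2norm x <= 1 /\ in_l2 (T x)
                               /\ r = l2norm (T x)).

Definition bounded_op (T : op) : Prop :=
  (forall x, in_l2 x -> in_l2 (T x)) /\ is_finite (opnorm T).

Definition diag (d : nat -> C) : op := fun x n => Cmult (d n) (x n).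

Definition is_C0_semigroup (S : R -> op) : Prop :=
  (forall t, 0 <= t -> bounded_op (S t)) /\
  (forall x, in_l2 x -> S 0 x = x) /\
  (forall t s x, 0 <= t -> 0 <= s -> in_l2 x -> S (t + s) x = S t (S s x)) /\
  (forall x, in_l2 x ->
     filterlim (fun t => l2norm (seq_sub (S t x) x)) (at_right 0) (locally 0)).

Definition generates (A : op) (DA : seqC -> Prop) (S : R -> op) : Prop :=
  (forall x, DA x -> in_l2 x) /\
  (forall x, in_l2 x ->
     (DA x <-> exists y, in_l2 y /\
        filterlim (fun t => l2norm (seq_sub (seq_scal (/ t) (seq_sub (S t x) x)) y))
                  (at_right 0) (locally 0))) /\
  (forall x, DA x ->
     filterlim (fun t => l2norm (seq_sub (seq_scal (/ t) (seq_sub (S t x) x)) (A x)))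
               (at_right 0) (locally 0)).

Definition polynomially_stable (A : op) (DA : seqC -> Prop) (S : R -> op)
  (beta : R) : Prop :=
  (exists K, forall t, 0 <= t -> Rbar_le (opnorm (S t)) (Finite K)) /\
  exists Rres : op,
    (forall x, in_l2 x -> DA (Rres x) /\ seq_sub (Rres x) (A (Rres x)) = x) /\
    (forall x, DA x -> Rres (seq_sub x (A x)) = x) /\
    exists M t0, 0 < M /\ 0 < t0 /\
      forall t, t0 <= t ->
        Rbar_le (opnorm (fun x => S t (Rres x))) (Finite (M * Rpower t (- / beta))).

Definition liminf_infty_ge (f : R -> Rbar) (b : R) : Prop :=
  forall eps, 0 < eps -> exists T, forall t, T <= t -> Rbar_le (Finite (b - eps)) (f t).

(** the concrete data: lambda_k = -1/k + i k, with k = n+1 *)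
Definition lam (n : nat) : C := (- / INR (S n), INR (S n)).
Definition Aop : op := diag lam.
Definition DAop (x : seqC) : Prop := in_l2 x /\ in_l2 (Aop x).

(** e^{A^{-1} t} (-A)^{-alpha}: diagonal with entries e^{t/lambda_k} (-lambda_k)^{-alpha} *)
Definition expAinv_negApow (t alpha : R) : op :=
  diag (fun n => Cmult (cexp (Cmult (RtoC t) (Cinv (lam n))))
                       (cpowR (Copp (lam n)) (- alpha))).

(* All operators involved are diagonal in the standard basis of l^2: they act entrywise and
   their norm is the supremum of the moduli of their entries.  For any eigenvalues with
   Re mu_k <= 0 the entries e^(t mu_k) form a contraction C_0-semigroup generated by diag mu,
   by dominated convergence for the series of squared entries.  Here Re lambda_k = -1/k and
   |1 - lambda_k| >= k, so e^(tA)(I - A)^(-1) has entries at most e^(-t/k)/k <= 1/t, i.e.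
   beta = 1.  For the lower bound, the k-th entry of e^(A^(-1) t)(-A)^(-alpha) has modulus at
   least 2^(-alpha/2) e^(-t/k^3) k^(-alpha); the integer k just above the maximiser
   (3t/alpha)^(1/3) of this expression gives the constant, up to a factor e^(-alpha/s) -> 1. *)

From Stdlib Require Import Reals Lra Lia FunctionalExtensionality.
From Coquelicot Require Import Coquelicot.
Open Scope R_scope.

Lemma exp_le_exp a b : a <= b -> exp a <= exp b.
Proof. intros [H|H]; [apply Rlt_le, exp_increasing; lra | subst; lra]. Qed.

Lemma sin_sq_le y : sin y ^ 2 <= y ^ 2.
Proof.
  assert (Hpos : forall x, 0 <= x -> - x <= sin x <= x).
  { intros x Hx. destruct (Req_dec x 0) as [->|Hx0]; [rewrite sin_0; lra|].
    pose proof (sin_lt_x x ltac:(lra)). split; [|lra].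
    destruct (Rle_dec 1 x); [pose proof (SIN_bound x); lra|].
    assert (0 <= sin x); [|lra].
    apply sin_ge_0; [lra|]. pose proof PI2_1. lra. }
  destruct (Rle_dec 0 y) as [Hy|Hy].
  - pose proof (Hpos y Hy). nra.
  - pose proof (Hpos (- y) ltac:(lra)). rewrite sin_neg in H. nra.
Qed.

Lemma one_minus_cos_le x : 1 - cos x <= x ^ 2 / 2.
Proof.
  replace x with (2 * (x / 2)) at 1 by field. rewrite cos_2a_sin.
  pose proof (sin_sq_le (x / 2)). nra.
Qed.

Lemma Cmod_cexp z : Cmod (cexp z) = exp (fst z).
Proof.
  destruct z as [a b]. unfold Cmod, cexp; cbn [fst snd].
  pose proof (sin2_cos2 b) as Hsc. unfold Rsqr in Hsc.
  replace ((exp a * cos b) ^ 2 + (exp a * sin b) ^ 2) with (exp a ^ 2) by nra.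
  apply sqrt_pow2. apply Rlt_le, exp_pos.
Qed.

Lemma Cmod_cpowR z w : Cmod (cpowR z w) = exp (w * ln (Cmod z)).
Proof. apply Cmod_cexp. Qed.

(* |e^(a+ib) - 1|^2 = (1 - e^a)^2 + 2 e^a (1 - cos b), bounded termwise by a^2 and b^2. *)
Lemma Cmod_cexp_sub1_le z : fst z <= 0 -> Cmod (Cminus (cexp z) 1) <= Cmod z.
Proof.
  destruct z as [a b]; cbn [fst]; intros Ha.
  unfold Cmod, cexp, Cminus, Cplus, Copp, RtoC; cbn [fst snd]. apply sqrt_le_1_alt.
  pose proof (sin2_cos2 b) as Hsc. unfold Rsqr in Hsc.
  pose proof (exp_ineq1_le a). pose proof (exp_pos a).
  assert (exp a <= 1) by (rewrite <- exp_0; apply exp_le_exp; lra).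
  assert ((1 - exp a) ^ 2 <= a ^ 2) by nra.
  assert (2 * exp a * (1 - cos b) <= b ^ 2).
  { pose proof (one_minus_cos_le b). pose proof (COS_bound b). nra. }
  assert (exp a ^ 2 * (sin b * sin b + cos b * cos b) = exp a ^ 2) by (rewrite Hsc; ring).
  nra.
Qed.

Lemma Cmod_sub_le a b : Cmod (Cminus a b) <= Cmod a + Cmod b.
Proof. unfold Cminus. rewrite <- (Cmod_opp b). apply Cmod_triangle. Qed.

(** * Series and limits at 0 from the right *)

Lemma ex_series_R_le (a b : nat -> R) :
  (forall n, 0 <= a n <= b n) -> ex_series b -> ex_series a.
Proof.
  intros H Eb. apply (@ex_series_le R_AbsRing R_CompleteNormedModule) with b; auto.
  intros n. specialize (H n). change (Rabs (a n) <= b n). rewrite Rabs_pos_eq; lra.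
Qed.

Lemma ex_series_R_scal c (a : nat -> R) : ex_series a -> ex_series (fun n => c * a n).
Proof. apply (@ex_series_scal_l R_AbsRing R_NormedModule). Qed.

Lemma ex_series_R_plus (a b : nat -> R) :
  ex_series a -> ex_series b -> ex_series (fun n => a n + b n).
Proof. apply (@ex_series_plus R_AbsRing R_NormedModule). Qed.

Lemma Series_ge0 a : (forall n, 0 <= a n) -> ex_series a -> 0 <= Series a.
Proof.
  intros H Ea. rewrite <- (Rmult_0_l (Series a)), <- Series_scal_l.
  apply Series_le; auto. intros n; specialize (H n); lra.
Qed.

Lemma term_le_Series a N : (forall n, 0 <= a n) -> ex_series a -> a N <= Series a.
Proof.
  intros H Ea. rewrite (Series_incr_n a (S N)) by (auto; lia). simpl pred.
  assert (a N <= sum_f_R0 a N).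
  { destruct N; simpl; [lra|]. pose proof (cond_pos_sum a N H). lra. }
  assert (0 <= Series (fun k => a (S N + k)%nat)); [|lra].
  apply Series_ge0; auto. apply (ex_series_incr_n a (S N)); auto.
Qed.

Lemma Series_tail_lt g eps : ex_series g -> 0 < eps ->
  exists N, Series (fun k => g (S N + k)%nat) < eps.
Proof.
  intros Eg He. pose proof (Series_correct g Eg) as Hg.
  destruct (proj1 (filterlim_locally (F := eventually) (sum_n g) (Series g)) Hg
              (mkposreal eps He)) as [N HN].
  exists N. specialize (HN N (le_n _)). change (Rabs (sum_n g N - Series g) < eps) in HN.
  rewrite (Series_incr_n g (S N)) in HN by (auto; lia). simpl pred in HN.
  rewrite sum_n_Reals in HN. apply Rabs_lt_between in HN. lra.
Qed.

Definition vanishes_right (h : R -> R) : Prop :=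
  forall eps, 0 < eps -> exists delta, 0 < delta /\
    forall t, 0 < t < delta -> Rabs (h t) < eps.

Lemma vanishes_rightE h : vanishes_right h <-> filterlim h (at_right 0) (locally 0).
Proof.
  split.
  - intros H. apply filterlim_locally. intros eps.
    destruct (H eps (cond_pos eps)) as [d [Hd Hh]]. exists (mkposreal d Hd).
    intros t Ht Ht0. change (Rabs (t - 0) < d) in Ht. change (Rabs (h t - 0) < eps).
    rewrite Rminus_0_r in *. apply Rabs_lt_between in Ht. apply Hh. lra.
  - intros H eps He. destruct (proj1 (filterlim_locally _ _) H (mkposreal eps He)) as [d Hd].
    exists d. split; [apply cond_pos|]. intros t Ht.
    assert (Hh : Rabs (h t - 0) < eps).
    { apply Hd; [|lra]. change (Rabs (t - 0) < d). rewrite Rminus_0_r, Rabs_pos_eq; lra. }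
    rewrite Rminus_0_r in Hh. exact Hh.
Qed.

Lemma vanishes_right_ext (h1 h2 : R -> R) :
  (forall t, h1 t = h2 t) -> vanishes_right h1 -> vanishes_right h2.
Proof.
  intros E H eps He. destruct (H eps He) as [d [Hd Hh]].
  exists d; split; auto. intros t Ht. rewrite <- E; auto.
Qed.

Lemma vanishes_right_lin (h : R -> R) c :
  (forall t, 0 < t < 1 -> 0 <= h t <= t * c) -> vanishes_right h.
Proof.
  intros H eps He. set (d := Rmin 1 (eps / (Rabs c + 1))).
  assert (Hc := Rabs_pos c). pose proof (Rle_abs c).
  assert (Hd1 : d <= 1) by apply Rmin_l.
  assert (Hd2 : d * (Rabs c + 1) <= eps).
  { apply Rle_trans with (eps / (Rabs c + 1) * (Rabs c + 1)).
    apply Rmult_le_compat_r; [lra|apply Rmin_r]. right; field; lra. }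
  exists d. split. apply Rmin_glb_lt; [lra|]. apply Rdiv_lt_0_compat; lra.
  intros t Ht. specialize (H t ltac:(lra)). rewrite Rabs_pos_eq by lra. nra.
Qed.

Lemma vanishes_right_le (h g : R -> R) :
  (forall t, 0 < t -> 0 <= h t <= g t) -> vanishes_right g -> vanishes_right h.
Proof.
  intros Hhg H eps He. destruct (H eps He) as [d [Hd Hg]]. exists d; split; auto.
  intros t Ht. specialize (Hhg t ltac:(lra)). specialize (Hg t Ht).
  rewrite Rabs_pos_eq in Hg by lra. rewrite Rabs_pos_eq; lra.
Qed.

Lemma vanishes_right_scal (h : R -> R) K :
  vanishes_right h -> vanishes_right (fun t => h t * K).
Proof.
  intros H eps He. destruct (H (eps / (Rabs K + 1))) as [d [Hd Hh]].
  { apply Rdiv_lt_0_compat; [lra|]. pose proof (Rabs_pos K); lra. }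
  exists d; split; auto. intros t Ht. specialize (Hh t Ht). pose proof (Rabs_pos K).
  rewrite Rabs_mult. apply Rle_lt_trans with (eps / (Rabs K + 1) * Rabs K).
  - apply Rmult_le_compat_r; lra.
  - apply Rlt_le_trans with (eps / (Rabs K + 1) * (Rabs K + 1)); [|right; field; lra].
    apply Rmult_lt_compat_l; [apply Rdiv_lt_0_compat|]; lra.
Qed.

Lemma vanishes_right_sqr (h : R -> R) : vanishes_right h -> vanishes_right (fun t => h t ^ 2).
Proof.
  intros H eps He. destruct (H (Rmin 1 eps)) as [d [Hd Hh]]; [apply Rmin_glb_lt; lra|].
  exists d; split; auto. intros t Ht. specialize (Hh t Ht).
  pose proof (Rmin_l 1 eps). pose proof (Rmin_r 1 eps). pose proof (Rabs_pos (h t)).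
  rewrite <- RPow_abs. simpl. rewrite Rmult_1_r.
  apply Rle_lt_trans with (Rabs (h t) * 1); [apply Rmult_le_compat_l; lra|lra].
Qed.

Lemma vanishes_right_Cmod_unique (g : R -> C) a b :
  vanishes_right (fun t => Cmod (Cminus (g t) a)) ->
  vanishes_right (fun t => Cmod (Cminus (g t) b)) -> a = b.
Proof.
  intros Ha Hb. apply Ceq_minus, Cmod_eq_0.
  destruct (Rle_lt_or_eq_dec 0 (Cmod (Cminus a b)) (Cmod_ge_0 _)) as [Hpos|]; auto.
  set (eps := Cmod (Cminus a b) / 2).
  destruct (Ha eps ltac:(unfold eps; lra)) as [d1 [Hd1 H1]].
  destruct (Hb eps ltac:(unfold eps; lra)) as [d2 [Hd2 H2]].
  set (t := Rmin d1 d2 / 2). pose proof (Rmin_l d1 d2). pose proof (Rmin_r d1 d2).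
  assert (0 < Rmin d1 d2) by (apply Rmin_glb_lt; auto).
  specialize (H1 t ltac:(unfold t; lra)). specialize (H2 t ltac:(unfold t; lra)).
  rewrite Rabs_pos_eq in H1, H2 by apply Cmod_ge_0.
  assert (Cminus a b = Cminus (Cminus (g t) b) (Cminus (g t) a)) as Hab by ring.
  pose proof (Cmod_sub_le (Cminus (g t) b) (Cminus (g t) a)) as Htri. rewrite <- Hab in Htri.
  unfold eps in *. lra.
Qed.

Lemma vanishes_right_sqrt (h : R -> R) : (forall t, 0 < t -> 0 <= h t) ->
  vanishes_right h -> vanishes_right (fun t => sqrt (h t)).
Proof.
  intros Hh H eps He. destruct (H (eps ^ 2) ltac:(nra)) as [d [Hd Hht]].
  exists d; split; auto. intros t Ht. specialize (Hht t Ht). specialize (Hh t ltac:(lra)).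
  rewrite Rabs_pos_eq in Hht by auto. rewrite Rabs_pos_eq by apply sqrt_pos.
  rewrite <- (sqrt_pow2 eps) by lra. apply sqrt_lt_1_alt. lra.
Qed.

Lemma vanishes_right_sum (f : R -> nat -> R) :
  (forall n, vanishes_right (fun t => f t n)) ->
  forall N, vanishes_right (fun t => sum_f_R0 (f t) N).
Proof.
  intros H N. induction N as [|N IH]; [apply H|].
  intros eps He. destruct (IH (eps / 2) ltac:(lra)) as [d1 [Hd1 H1]].
  destruct (H (S N) (eps / 2) ltac:(lra)) as [d2 [Hd2 H2]].
  exists (Rmin d1 d2). split; [apply Rmin_glb_lt; auto|].
  intros t Ht. pose proof (Rmin_l d1 d2). pose proof (Rmin_r d1 d2).
  specialize (H1 t ltac:(lra)). specialize (H2 t ltac:(lra)).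
  simpl. eapply Rle_lt_trans; [apply Rabs_triang|lra].
Qed.

(* Dominated convergence for series: the tail is uniformly small, the head is a finite sum. *)
Lemma vanishes_right_Series (f : R -> nat -> R) (g : nat -> R) :
  ex_series g -> (forall t n, 0 < t -> 0 <= f t n <= g n) ->
  (forall n, vanishes_right (fun t => f t n)) -> vanishes_right (fun t => Series (f t)).
Proof.
  intros Eg Hfg Hf eps He.
  destruct (Series_tail_lt g (eps / 2) Eg ltac:(lra)) as [N HN].
  destruct (vanishes_right_sum f Hf N (eps / 2) ltac:(lra)) as [d [Hd Hhead]].
  exists d; split; auto. intros t Ht.
  assert (Hpos : forall n, 0 <= f t n) by (intros n; apply (Hfg t n); lra).
  assert (Ef : ex_series (f t)) by (apply ex_series_R_le with g; auto; intros n; apply Hfg; lra).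
  rewrite Rabs_pos_eq by (apply Series_ge0; auto).
  rewrite (Series_incr_n (f t) (S N)) by (auto; lia). simpl pred.
  specialize (Hhead t Ht). rewrite Rabs_pos_eq in Hhead by (apply cond_pos_sum; auto).
  assert (Series (fun k => f t (S N + k)%nat) <= Series (fun k => g (S N + k)%nat)).
  { apply Series_le; [intros n; apply Hfg; lra|]. apply (ex_series_incr_n g (S N)); auto. }
  lra.
Qed.

(** * Diagonal operators on l^2 *)

Lemma Cmod_sqr_ge0 z : 0 <= Cmod z ^ 2.
Proof. pose proof (Cmod_ge_0 z). nra. Qed.

Lemma in_l2_sub x y : in_l2 x -> in_l2 y -> in_l2 (seq_sub x y).
Proof.
  intros Hx Hy. apply ex_series_R_le with (fun n => 2 * Cmod (x n) ^ 2 + 2 * Cmod (y n) ^ 2).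
  - intros n. split; [apply Cmod_sqr_ge0|]. unfold seq_sub.
    pose proof (Cmod_sub_le (x n) (y n)). pose proof (Cmod_ge_0 (Cminus (x n) (y n))).
    pose proof (Cmod_ge_0 (x n)). pose proof (Cmod_ge_0 (y n)).
    assert (Cmod (Cminus (x n) (y n)) ^ 2 <= (Cmod (x n) + Cmod (y n)) ^ 2)
      by (apply pow_incr; lra).
    pose proof (pow2_ge_0 (Cmod (x n) - Cmod (y n))). lra.
  - apply ex_series_R_plus; apply ex_series_R_scal; auto.
Qed.

Lemma Cmod_le_l2norm z n : in_l2 z -> Cmod (z n) <= l2norm z.
Proof.
  intros Hz. unfold l2norm. rewrite <- (sqrt_pow2 (Cmod (z n))) by apply Cmod_ge_0.
  apply sqrt_le_1_alt, (term_le_Series (fun k => Cmod (z k) ^ 2)); auto.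
  intros k; apply Cmod_sqr_ge0.
Qed.

Lemma in_l2_single (z : seqC) n : (forall k, k <> n -> z k = 0) ->
  in_l2 z /\ l2norm z = Cmod (z n).
Proof.
  intros Hz. set (a := fun k => Cmod (z k) ^ 2).
  assert (Hpartial : forall N, (n <= N)%nat -> sum_f_R0 a N = a n).
  { intros N HN. induction HN as [|N HN IH]; simpl.
    - destruct n as [|n]; simpl; [reflexivity|].
      rewrite sum_eq_R0; [ring|]. intros k Hk.
      unfold a. rewrite Hz by lia. rewrite Cmod_0. ring.
    - rewrite IH. unfold a at 2. rewrite Hz by lia. rewrite Cmod_0. ring. }
  assert (Ha : is_series a (a n)).
  { apply filterlim_ext_loc with (fun _ => a n); [|apply filterlim_const].
    exists n. intros N HN. rewrite sum_n_Reals. symmetry; auto. }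
  split; [exists (a n); exact Ha|].
  unfold l2norm. fold a. rewrite (is_series_unique _ _ Ha). apply sqrt_pow2, Cmod_ge_0.
Qed.

Lemma diag_l2 d M x : 0 <= M -> (forall n, Cmod (d n) <= M) -> in_l2 x ->
  in_l2 (diag d x) /\ l2norm (diag d x) <= M * l2norm x.
Proof.
  intros HM Hd Hx.
  assert (Hb : forall n, 0 <= Cmod (diag d x n) ^ 2 <= M ^ 2 * Cmod (x n) ^ 2).
  { intros n. unfold diag. rewrite Cmod_mult, Rpow_mult_distr.
    split; [apply Rmult_le_pos; apply Cmod_sqr_ge0|].
    apply Rmult_le_compat_r; [apply Cmod_sqr_ge0|].
    apply pow_incr. split; [apply Cmod_ge_0|apply Hd]. }
  assert (Hdx : in_l2 (diag d x)).
  { apply ex_series_R_le with (fun n => M ^ 2 * Cmod (x n) ^ 2); auto.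
    apply ex_series_R_scal; auto. }
  split; auto. unfold l2norm.
  rewrite <- (sqrt_pow2 M), <- sqrt_mult_alt by nra. apply sqrt_le_1_alt.
  rewrite <- Series_scal_l. apply Series_le; auto. apply ex_series_R_scal; auto.
Qed.

Lemma opnorm_diag_le d M : 0 <= M -> (forall n, Cmod (d n) <= M) ->
  Rbar_le (opnorm (diag d)) (Finite M).
Proof.
  intros HM Hd. apply Lub_Rbar_correct. intros r [x [Hx [Hn [_ ->]]]]. simpl.
  destruct (diag_l2 d M x HM Hd Hx) as [_ H]. nra.
Qed.

Lemma opnorm_diag_ge d n : Rbar_le (Finite (Cmod (d n))) (opnorm (diag d)).
Proof.
  apply Lub_Rbar_correct. set (e := fun k => if Nat.eq_dec k n then RtoC 1 else RtoC 0).
  assert (He : forall k, k <> n -> e k = 0).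
  { intros k Hk. unfold e. destruct (Nat.eq_dec k n); [lia|reflexivity]. }
  assert (Hen : e n = 1) by (unfold e; destruct (Nat.eq_dec n n); [reflexivity|lia]).
  assert (Hde : forall k, k <> n -> diag d e k = 0).
  { intros k Hk. unfold diag. rewrite He by auto. apply Cmult_0_r. }
  destruct (in_l2_single e n He) as [He2 Hen2].
  destruct (in_l2_single _ n Hde) as [Hde2 Hden2].
  exists e. repeat split; auto.
  - rewrite Hen2, Hen, Cmod_1. lra.
  - rewrite Hden2. unfold diag. rewrite Hen, Cmult_1_r. reflexivity.
Qed.

Lemma diag_bounded_op d M : 0 <= M -> (forall n, Cmod (d n) <= M) -> bounded_op (diag d).
Proof.
  intros HM Hd. split; [intros x Hx; apply (diag_l2 d M x HM Hd Hx)|].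
  pose proof (opnorm_diag_ge d 0) as Hge. pose proof (opnorm_diag_le d M HM Hd) as Hle.
  destruct (opnorm (diag d)); easy.
Qed.

(** * Semigroups of diagonal operators *)

Definition exp_entry (mu : nat -> C) (t : R) (n : nat) : C :=
  cexp (t * fst (mu n), t * snd (mu n)).
Definition diag_exp (mu : nat -> C) (t : R) : op := diag (exp_entry mu t).
Definition diff_quot (mu : nat -> C) (t : R) (n : nat) : C :=
  Cmult (RtoC (/ t)) (Cminus (exp_entry mu t n) 1).
Definition diag_domain (mu : nat -> C) (x : seqC) : Prop := in_l2 x /\ in_l2 (diag mu x).

Lemma exp_entry_derivative_at0 mu n :
  vanishes_right (fun t => Cmod (Cminus (diff_quot mu t n) (mu n))).
Proof.
  unfold diff_quot, exp_entry. destruct (mu n) as [a b]; cbn [fst snd].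
  assert (Hre : derivable_pt_lim (fun t => exp (t * a) * cos (t * b)) 0 a).
  { apply is_derive_Reals. auto_derive; auto. rewrite !Rmult_0_l, exp_0, cos_0, sin_0. ring. }
  assert (Him : derivable_pt_lim (fun t => exp (t * a) * sin (t * b)) 0 b).
  { apply is_derive_Reals. auto_derive; auto. rewrite !Rmult_0_l, exp_0, cos_0, sin_0. ring. }
  intros eps He. destruct (Hre (eps / 2) ltac:(lra)) as [d1 H1].
  destruct (Him (eps / 2) ltac:(lra)) as [d2 H2].
  exists (Rmin d1 d2). split; [apply Rmin_glb_lt; apply cond_pos|].
  intros t Ht. pose proof (Rmin_l d1 d2). pose proof (Rmin_r d1 d2).
  specialize (H1 t ltac:(lra) ltac:(rewrite Rabs_pos_eq; lra)).
  specialize (H2 t ltac:(lra) ltac:(rewrite Rabs_pos_eq; lra)).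
  rewrite Rplus_0_l, !Rmult_0_l, exp_0, cos_0 in H1.
  rewrite Rplus_0_l, !Rmult_0_l, exp_0, sin_0 in H2.
  rewrite Rabs_pos_eq by apply Cmod_ge_0.
  unfold Cminus, Cmult, Cplus, Copp, RtoC, cexp, Cmod; cbn [fst snd].
  match goal with |- sqrt (?X ^ 2 + ?Y ^ 2) < _ =>
    replace X with ((exp (t * a) * cos (t * b) - 1 * 1) / t - a) by (field; lra);
    replace Y with ((exp (t * a) * sin (t * b) - 1 * 0) / t - b) by (field; lra) end.
  set (u := _ / t - a) in *. set (v := _ / t - b) in *.
  apply Rle_lt_trans with (sqrt ((Rabs u + Rabs v) ^ 2)).
  - apply sqrt_le_1_alt. rewrite <- (pow2_abs u), <- (pow2_abs v).
    pose proof (Rabs_pos u). pose proof (Rabs_pos v). nra.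
  - rewrite sqrt_pow2 by (pose proof (Rabs_pos u); pose proof (Rabs_pos v); lra). lra.
Qed.

Section DiagonalSemigroup.

Variable mu : nat -> C.
Hypothesis mu_re_nonpos : forall n, fst (mu n) <= 0.

Lemma Cmod_exp_entry t n : Cmod (exp_entry mu t n) = exp (t * fst (mu n)).
Proof. apply Cmod_cexp. Qed.

Lemma Cmod_exp_entry_le1 t n : 0 <= t -> Cmod (exp_entry mu t n) <= 1.
Proof.
  intros Ht. rewrite Cmod_exp_entry, <- exp_0. apply exp_le_exp.
  pose proof (mu_re_nonpos n). nra.
Qed.

Lemma exp_entry_0 n : exp_entry mu 0 n = 1.
Proof.
  unfold exp_entry, cexp. rewrite !Rmult_0_l. cbn [fst snd].
  rewrite exp_0, cos_0, sin_0. unfold RtoC. f_equal; ring.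
Qed.

Lemma exp_entry_add t s n :
  exp_entry mu (t + s) n = Cmult (exp_entry mu t n) (exp_entry mu s n).
Proof.
  unfold exp_entry, cexp, Cmult; cbn [fst snd].
  rewrite !Rmult_plus_distr_r, exp_plus, cos_plus, sin_plus. f_equal; ring.
Qed.

Lemma Cmod_exp_entry_sub1_le t n : 0 <= t ->
  Cmod (Cminus (exp_entry mu t n) 1) <= t * Cmod (mu n).
Proof.
  intros Ht. eapply Rle_trans; [apply Cmod_cexp_sub1_le|].
  - cbn [fst]. pose proof (mu_re_nonpos n). nra.
  - replace (t * fst (mu n), t * snd (mu n)) with (Cmult (RtoC t) (mu n))
      by (unfold Cmult, RtoC; cbn [fst snd]; f_equal; ring).
    rewrite Cmod_mult, Cmod_R, Rabs_pos_eq; lra.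
Qed.

Lemma Cmod_diff_quot_le t n : 0 < t -> Cmod (diff_quot mu t n) <= Cmod (mu n).
Proof.
  intros Ht. unfold diff_quot. rewrite Cmod_mult, Cmod_R, Rabs_pos_eq
    by (apply Rlt_le, Rinv_0_lt_compat; auto).
  pose proof (Cmod_exp_entry_sub1_le t n ltac:(lra)) as H.
  apply Rmult_le_compat_l with (r := / t) in H; [|apply Rlt_le, Rinv_0_lt_compat; auto].
  rewrite <- Rmult_assoc, Rinv_l in H; lra.
Qed.

Lemma Cmod_diff_quot_bound t n : 0 < t -> Cmod (diff_quot mu t n) <= 2 / t.
Proof.
  intros Ht. unfold diff_quot. rewrite Cmod_mult, Cmod_R, Rabs_pos_eq
    by (apply Rlt_le, Rinv_0_lt_compat; auto).
  pose proof (Cmod_sub_le (exp_entry mu t n) 1). rewrite Cmod_1 in H.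
  pose proof (Cmod_exp_entry_le1 t n ltac:(lra)).
  pose proof (Rinv_0_lt_compat t Ht). unfold Rdiv. nra.
Qed.

Lemma diag_exp_sub t x n :
  seq_sub (diag_exp mu t x) x n = Cmult (Cminus (exp_entry mu t n) 1) (x n).
Proof. unfold seq_sub, diag_exp, diag. ring. Qed.

Lemma diag_exp_quot t x :
  seq_scal (/ t) (seq_sub (diag_exp mu t x) x) = diag (diff_quot mu t) x.
Proof.
  apply functional_extensionality; intros n.
  unfold seq_scal, seq_sub, diag_exp, diag, diff_quot. ring.
Qed.

Lemma diag_exp_C0 : is_C0_semigroup (diag_exp mu).
Proof.
  split; [|split; [|split]].
  - intros t Ht. apply (diag_bounded_op _ 1); [lra|]. intros; apply Cmod_exp_entry_le1; auto.
  - intros x Hx. apply functional_extensionality; intros n.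
    unfold diag_exp, diag. rewrite exp_entry_0. apply Cmult_1_l.
  - intros t s x Ht Hs Hx. apply functional_extensionality; intros n.
    unfold diag_exp, diag. rewrite exp_entry_add. symmetry. apply Cmult_assoc.
  - intros x Hx. apply vanishes_rightE, vanishes_right_sqrt.
    + intros t Ht. apply Series_ge0; [intros; apply Cmod_sqr_ge0|].
      apply in_l2_sub; auto. apply (diag_l2 _ 1); auto; [lra|].
      intros; apply Cmod_exp_entry_le1; lra.
    + apply vanishes_right_Series with (g := fun n => 4 * Cmod (x n) ^ 2).
      * apply ex_series_R_scal; auto.
      * intros t n Ht. rewrite diag_exp_sub, Cmod_mult, Rpow_mult_distr.
        pose proof (Cmod_sub_le (exp_entry mu t n) 1). rewrite Cmod_1 in H.
        pose proof (Cmod_exp_entry_le1 t n ltac:(lra)).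
        pose proof (Cmod_ge_0 (Cminus (exp_entry mu t n) 1)).
        pose proof (Cmod_sqr_ge0 (x n)). split; [nra|].
        apply Rmult_le_compat_r; nra.
      * intros n. apply vanishes_right_lin with (c := Cmod (mu n) ^ 2 * Cmod (x n) ^ 2).
        intros t Ht. rewrite diag_exp_sub, Cmod_mult, Rpow_mult_distr.
        pose proof (Cmod_exp_entry_sub1_le t n ltac:(lra)).
        pose proof (Cmod_ge_0 (Cminus (exp_entry mu t n) 1)).
        pose proof (Cmod_sqr_ge0 (x n)). split; [nra|].
        assert (Cmod (Cminus (exp_entry mu t n) 1) ^ 2 <= t * Cmod (mu n) ^ 2).
        { apply Rle_trans with ((t * Cmod (mu n)) ^ 2); [apply pow_incr; lra|].
          pose proof (Cmod_sqr_ge0 (mu n)). nra. }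
        nra.
Qed.

Lemma in_l2_diag_diff_quot t x : 0 < t -> in_l2 x -> in_l2 (diag (diff_quot mu t) x).
Proof.
  intros Ht Hx. apply (diag_l2 _ (2 / t)); auto.
  - apply Rlt_le, Rdiv_lt_0_compat; lra.
  - intros n; apply Cmod_diff_quot_bound; auto.
Qed.

Lemma diag_exp_generator_limit x : diag_domain mu x ->
  filterlim (fun t => l2norm (seq_sub (seq_scal (/ t) (seq_sub (diag_exp mu t x) x)) (diag mu x)))
            (at_right 0) (locally 0).
Proof.
  intros [Hx Hmx]. apply vanishes_rightE. unfold l2norm.
  assert (Hw : forall t n,
    seq_sub (seq_scal (/ t) (seq_sub (diag_exp mu t x) x)) (diag mu x) n
    = Cmult (Cminus (diff_quot mu t n) (mu n)) (x n)).
  { intros t n. rewrite diag_exp_quot. unfold seq_sub, diag. ring. }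
  apply vanishes_right_sqrt.
  - intros t Ht. apply Series_ge0; [intros; apply Cmod_sqr_ge0|].
    rewrite diag_exp_quot. apply in_l2_sub; auto. apply in_l2_diag_diff_quot; auto.
  - apply vanishes_right_Series with (g := fun n => 4 * Cmod (diag mu x n) ^ 2).
    + apply ex_series_R_scal; auto.
    + intros t n Ht. rewrite Hw. unfold diag. rewrite !Cmod_mult, !Rpow_mult_distr.
      pose proof (Cmod_diff_quot_le t n Ht). pose proof (Cmod_sub_le (diff_quot mu t n) (mu n)).
      pose proof (Cmod_ge_0 (Cminus (diff_quot mu t n) (mu n))).
      pose proof (Cmod_sqr_ge0 (x n)). split; [nra|].
      assert (Cmod (Cminus (diff_quot mu t n) (mu n)) ^ 2 <= 4 * Cmod (mu n) ^ 2)
        by (replace 4 with (2 ^ 2) by ring; rewrite <- Rpow_mult_distr; apply pow_incr; lra).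
      nra.
    + intros n. apply vanishes_right_ext
        with (fun t => (Cmod (Cminus (diff_quot mu t n) (mu n)) * Cmod (x n)) ^ 2).
      { intros t. rewrite Hw, Cmod_mult. reflexivity. }
      apply vanishes_right_sqr, vanishes_right_scal, exp_entry_derivative_at0.
Qed.

(* The l2 limit of the difference quotients dominates each entry, whose limit is mu n * x n. *)
Lemma diag_exp_generator_unique x y : in_l2 x -> in_l2 y ->
  filterlim (fun t => l2norm (seq_sub (seq_scal (/ t) (seq_sub (diag_exp mu t x) x)) y))
            (at_right 0) (locally 0) ->
  diag mu x = y.
Proof.
  intros Hx Hy Hlim. apply vanishes_rightE in Hlim.
  apply functional_extensionality; intros n.
  apply (vanishes_right_Cmod_unique (fun t => Cmult (diff_quot mu t n) (x n))).
  - apply vanishes_right_ext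
      with (fun t => Cmod (Cminus (diff_quot mu t n) (mu n)) * Cmod (x n)).
    { intros t. unfold diag. rewrite <- Cmod_mult. f_equal. ring. }
    apply vanishes_right_scal, exp_entry_derivative_at0.
  - eapply vanishes_right_le; [|exact Hlim]. intros t Ht.
    split; [apply Cmod_ge_0|]. rewrite diag_exp_quot.
    apply (Cmod_le_l2norm (seq_sub (diag (diff_quot mu t) x) y) n).
    apply in_l2_sub; auto. apply in_l2_diag_diff_quot; auto.
Qed.

Lemma diag_exp_generates : generates (diag mu) (diag_domain mu) (diag_exp mu).
Proof.
  split; [|split].
  - intros x [Hx _]; auto.
  - intros x Hx. split.
    + intros Hdom. exists (diag mu x). split; [apply Hdom|]. apply diag_exp_generator_limit; auto.
    + intros [y [Hy Hlim]]. split; auto.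
      rewrite (diag_exp_generator_unique x y Hx Hy Hlim). auto.
  - apply diag_exp_generator_limit.
Qed.

Definition resolvent_one : op := diag (fun n => Cinv (Cminus 1 (mu n))).

Lemma Cmod_one_sub_ge1 n : 1 <= Cmod (Cminus 1 (mu n)).
Proof.
  generalize (mu_re_nonpos n). destruct (mu n) as [a b]; cbn [fst]; intros Ha.
  unfold Cmod, Cminus, Cplus, Copp, RtoC; cbn [fst snd].
  rewrite <- sqrt_1 at 1. apply sqrt_le_1_alt. nra.
Qed.

Lemma Cmod_le_one_sub n : Cmod (mu n) <= Cmod (Cminus 1 (mu n)).
Proof.
  generalize (mu_re_nonpos n). destruct (mu n) as [a b]; cbn [fst]; intros Ha.
  unfold Cmod, Cminus, Cplus, Copp, RtoC; cbn [fst snd]. apply sqrt_le_1_alt. nra.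
Qed.

Lemma one_sub_neq0 n : Cminus 1 (mu n) <> 0.
Proof.
  intros E. pose proof (Cmod_one_sub_ge1 n). rewrite E, Cmod_0 in H. lra.
Qed.

Lemma resolvent_one_domain x : in_l2 x -> diag_domain mu (resolvent_one x).
Proof.
  intros Hx. split.
  - apply (diag_l2 _ 1 x); auto; [lra|]. intros n.
    rewrite Cmod_inv by apply one_sub_neq0. apply Rle_trans with (/ 1); [|rewrite Rinv_1; lra].
    apply Rinv_le_contravar; [lra|apply Cmod_one_sub_ge1].
  - replace (diag mu (resolvent_one x))
      with (diag (fun n => Cmult (mu n) (Cinv (Cminus 1 (mu n)))) x)
      by (apply functional_extensionality; intros n; unfold resolvent_one, diag; ring).
    apply (diag_l2 _ 1 x); auto; [lra|]. intros n.
    rewrite Cmod_mult, Cmod_inv by apply one_sub_neq0.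
    pose proof (Cmod_one_sub_ge1 n). pose proof (Cmod_le_one_sub n).
    apply Rmult_le_reg_r with (Cmod (Cminus 1 (mu n))); [lra|].
    rewrite Rmult_assoc, Rinv_l; lra.
Qed.

Lemma diag_exp_polynomially_stable beta M t0 : 0 < M -> 0 < t0 ->
  (forall t n, t0 <= t ->
     Cmod (Cmult (exp_entry mu t n) (Cinv (Cminus 1 (mu n)))) <= M * Rpower t (- / beta)) ->
  polynomially_stable (diag mu) (diag_domain mu) (diag_exp mu) beta.
Proof.
  intros HM Ht0 Hdecay. split.
  { exists 1. intros t Ht. apply opnorm_diag_le; [lra|]. intros; apply Cmod_exp_entry_le1; auto. }
  exists resolvent_one. split; [|split].
  - intros x Hx. split; [apply resolvent_one_domain; auto|].
    apply functional_extensionality; intros n. unfold seq_sub, resolvent_one, diag.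
    pose proof (one_sub_neq0 n). field; auto.
  - intros x _. apply functional_extensionality; intros n. unfold seq_sub, resolvent_one, diag.
    pose proof (one_sub_neq0 n). field; auto.
  - exists M, t0. split; [auto|]. split; [auto|]. intros t Ht.
    replace (fun x => diag_exp mu t (resolvent_one x))
      with (diag (fun n => Cmult (exp_entry mu t n) (Cinv (Cminus 1 (mu n))))).
    + apply opnorm_diag_le; auto. apply Rmult_le_pos; [lra|apply Rlt_le, exp_pos].
    + apply functional_extensionality; intros x. apply functional_extensionality; intros n.
      unfold diag_exp, resolvent_one, diag. ring.
Qed.

End DiagonalSemigroup.

(** * The operator A *)

Lemma lam_re_nonpos n : fst (lam n) <= 0.
Proof.
  cbn [lam fst]. pose proof (Rinv_0_lt_compat (INR (S n)) (lt_0_INR _ (Nat.lt_0_succ n))). lra.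
Qed.

(* Since Re lam_k = -1/k and |1 - lam_k| >= k, the entry is at most e^(-t/k)/k <= 1/t. *)
Lemma lam_resolvent_decay t n : 0 < t ->
  Cmod (Cmult (exp_entry lam t n) (Cinv (Cminus 1 (lam n)))) <= / t.
Proof.
  intros Ht. set (k := INR (S n)).
  assert (Hk : 0 < k) by apply lt_0_INR, Nat.lt_0_succ.
  assert (Hres : k <= Cmod (Cminus 1 (lam n))).
  { unfold Cmod, Cminus, Cplus, Copp, RtoC, lam; cbn [fst snd]. fold k.
    rewrite <- (sqrt_pow2 k) at 1 by lra. apply sqrt_le_1_alt.
    pose proof (Rinv_0_lt_compat k Hk). nra. }
  assert (Hexp : exp (- (t / k)) <= k / t).
  { rewrite exp_Ropp. replace (k / t) with (/ (t / k)) by (field; lra).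
    assert (0 < t / k) by (apply Rdiv_lt_0_compat; lra).
    apply Rinv_le_contravar; auto. pose proof (exp_ineq1_le (t / k)). lra. }
  rewrite Cmod_mult, Cmod_inv, Cmod_exp_entry.
  2: { intros E. rewrite E, Cmod_0 in Hres. lra. }
  replace (t * fst (lam n)) with (- (t / k)) by (cbn [lam fst]; fold k; field; lra).
  apply Rle_trans with (k / t * / k); [|right; field; lra].
  apply Rmult_le_compat; auto; [apply Rlt_le, exp_pos|apply Rlt_le, Rinv_0_lt_compat; lra|].
  apply Rinv_le_contravar; lra.
Qed.

Lemma Rbar_mult_Finite_le p c (o : Rbar) : 0 < p -> Rbar_le (Finite c) o ->
  Rbar_le (Finite (p * c)) (Rbar_mult (Finite p) o).
Proof.
  intros Hp Ho. destruct o as [r| |]; simpl in *; try contradiction.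
  - apply Rmult_le_compat_l; lra.
  - unfold Rbar_mult, Rbar_mult'. destruct (Rle_dec 0 p); [|lra].
    destruct (Rle_lt_or_eq_dec 0 p r); simpl; auto. lra.
Qed.

Definition expAinv_negApow_entry (t alpha : R) (n : nat) : C :=
  Cmult (cexp (Cmult (RtoC t) (Cinv (lam n)))) (cpowR (Copp (lam n)) (- alpha)).

(* With q = 1/k^2 + k^2 we have k^2 <= q <= 2 k^2, so Re(t/lam_k) = -t/(k q) >= -t/k^3
   and |lam_k| = sqrt q <= sqrt 2 k. *)
Lemma Cmod_expAinv_negApow_entry_ge t alpha n : 0 <= t -> 0 < alpha ->
  exp (- (t / INR (S n) ^ 3) - alpha / 2 * ln 2 - alpha * ln (INR (S n)))
  <= Cmod (expAinv_negApow_entry t alpha n).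
Proof.
  intros Ht Ha. set (k := INR (S n)).
  assert (Hk1 : 1 <= k) by (unfold k; rewrite S_INR; pose proof (pos_INR n); lra).
  set (q := (- / k) ^ 2 + k ^ 2).
  assert (Hik : 0 < / k <= 1).
  { split; [apply Rinv_0_lt_compat; lra|]. rewrite <- Rinv_1. apply Rinv_le_contravar; lra. }
  assert (Hq1 : k ^ 2 <= q) by (unfold q; nra).
  assert (Hq2 : q <= 2 * k ^ 2) by (unfold q; nra).
  unfold expAinv_negApow_entry. rewrite Cmod_mult, Cmod_cexp, Cmod_cpowR, Cmod_opp, <- exp_plus.
  apply exp_le_exp.
  replace (fst (Cmult (RtoC t) (Cinv (lam n)))) with (- (t * / k / q))
    by (unfold Cmult, RtoC, Cinv, lam; cbn [fst snd]; fold k; fold q; field; nra).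
  replace (Cmod (lam n)) with (sqrt q) by reflexivity.
  assert (Hre : t * / k / q <= t / k ^ 3).
  { unfold Rdiv. rewrite Rmult_assoc. apply Rmult_le_compat_l; auto.
    replace (/ k ^ 3) with (/ k * / k ^ 2) by (field; lra).
    apply Rmult_le_compat_l; [lra|]. apply Rinv_le_contravar; nra. }
  assert (Hln : ln (sqrt q) <= ln 2 / 2 + ln k).
  { assert (Hsq : sqrt (2 * k ^ 2) = sqrt 2 * k)
      by (rewrite sqrt_mult_alt, sqrt_pow2 by lra; reflexivity).
    apply Rle_trans with (ln (sqrt 2 * k)).
    - apply ln_le; [apply sqrt_lt_R0; nra|]. rewrite <- Hsq. apply sqrt_le_1_alt; auto.
    - rewrite ln_mult by (try apply sqrt_lt_R0; lra).
      rewrite <- (sqrt_sqrt 2) at 2 by lra. rewrite ln_mult by (apply sqrt_lt_R0; lra). lra. }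
  assert (alpha * ln (sqrt q) <= alpha * (ln 2 / 2 + ln k)) by (apply Rmult_le_compat_l; lra).
  lra.
Qed.

Lemma exp_ln_div3_cube x : 0 < x -> exp (ln x / 3) ^ 3 = x.
Proof.
  intros Hx. simpl. rewrite Rmult_1_r, <- !exp_plus.
  replace (ln x / 3 + (ln x / 3 + ln x / 3)) with (ln x) by field. apply exp_ln; auto.
Qed.

Definition lower_const (alpha : R) : R :=
  exp (- (alpha / 2) * ln 2 + alpha / 3 * (ln alpha - ln 3 - 1)).

Lemma lower_constE alpha : 0 < alpha ->
  / Rpower 2 (alpha / 2) * Rpower (alpha / (3 * exp 1)) (alpha / 3) = lower_const alpha.
Proof.
  intros Ha. unfold Rpower, lower_const. rewrite <- exp_Ropp, <- exp_plus. f_equal.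
  pose proof (exp_pos 1). replace (alpha / (3 * exp 1)) with (alpha * / (3 * exp 1)) by reflexivity.
  rewrite (ln_mult alpha), ln_Rinv, (ln_mult 3 (exp 1)), ln_exp; try lra.
  apply Rinv_0_lt_compat. lra.
Qed.

(* The k-th entry with s = (3t/alpha)^(1/3) < k <= s + 1: s is where e^(-t/k^3) k^(-alpha) peaks,
   and ln k <= ln s + 1/s accounts for the rounding. *)
Lemma expAinv_negApow_entry_near_peak t alpha n : 0 < t -> 0 < alpha ->
  let s := exp (ln (3 * t / alpha) / 3) in
  s < INR (S n) <= s + 1 ->
  lower_const alpha * exp (- (alpha / s)) <=
  Rpower t (alpha / 3) * Cmod (expAinv_negApow_entry t alpha n).
Proof.
  intros Ht Ha s [Hsk Hks]. set (k := INR (S n)) in *.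
  assert (Hs : 0 < s) by apply exp_pos.
  assert (Hs3 : s ^ 3 = 3 * t / alpha) by (apply exp_ln_div3_cube, Rdiv_lt_0_compat; lra).
  assert (Hlns : ln s = (ln 3 + ln t - ln alpha) / 3).
  { unfold s. rewrite ln_exp. replace (3 * t / alpha) with (3 * t * / alpha) by reflexivity.
    rewrite (ln_mult (3 * t)), ln_mult, ln_Rinv; try lra; try apply Rinv_0_lt_compat; lra. }
  assert (Hdecay : t / k ^ 3 <= alpha / 3).
  { apply Rle_trans with (t / s ^ 3); [|rewrite Hs3; right; field; lra].
    apply Rmult_le_compat_l; [lra|]. apply Rinv_le_contravar; [apply pow_lt; lra|].
    apply pow_incr; lra. }
  assert (Hlnk : ln k <= ln s + / s).
  { apply Rle_trans with (ln (s * (1 + / s))).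
    - apply ln_le; [lra|]. replace (s * (1 + / s)) with (s + 1) by (field; lra). lra.
    - pose proof (Rinv_0_lt_compat s Hs). rewrite ln_mult by lra.
      rewrite <- (ln_exp (/ s)) at 2. apply Rplus_le_compat_l, ln_le; [lra|apply exp_ineq1_le]. }
  eapply Rle_trans; [|apply Rmult_le_compat_l;
    [apply Rlt_le, exp_pos|apply Cmod_expAinv_negApow_entry_ge; lra]].
  unfold lower_const, Rpower. rewrite <- !exp_plus. apply exp_le_exp.
  assert (alpha * ln k <= alpha * (ln s + / s)) as H by (apply Rmult_le_compat_l; lra).
  rewrite Hlns in H. fold k. unfold Rdiv in *. nra.
Qed.

Lemma expAinv_negApow_liminf alpha : 0 < alpha ->
  liminf_infty_ge
    (fun t => Rbar_mult (Finite (Rpower t (alpha / 3))) (opnorm (expAinv_negApow t alpha)))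
    (/ Rpower 2 (alpha / 2) * Rpower (alpha / (3 * exp 1)) (alpha / 3)).
Proof.
  intros Ha eps He. rewrite lower_constE by auto. set (b := lower_const alpha).
  assert (Hb : 0 < b) by apply exp_pos.
  set (S1 := alpha * b / eps).
  assert (HS1 : 0 < S1) by (apply Rdiv_lt_0_compat; nra).
  assert (HS13 : 0 < S1 ^ 3) by (apply pow_lt; lra).
  exists (alpha / 3 * S1 ^ 3 + 1). intros t Ht.
  assert (Ht0 : 0 < t) by (assert (0 < alpha / 3 * S1 ^ 3) by (apply Rmult_lt_0_compat; lra); lra).
  set (s := exp (ln (3 * t / alpha) / 3)).
  assert (Hs3 : s ^ 3 = 3 * t / alpha) by (apply exp_ln_div3_cube, Rdiv_lt_0_compat; lra).
  assert (HsS : S1 < s).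
  { destruct (Rlt_le_dec S1 s) as [|Hle]; auto.
    assert (s ^ 3 <= S1 ^ 3) by (apply pow_incr; split; [apply Rlt_le, exp_pos|auto]).
    assert (S1 ^ 3 < 3 * t / alpha); [|lra].
    apply Rmult_lt_reg_r with alpha; auto. unfold Rdiv. rewrite Rmult_assoc, Rinv_l; nra. }
  destruct (nfloor_ex s) as [m Hm]; [apply Rlt_le, exp_pos|].
  assert (Hk : s < INR (S m) <= s + 1) by (rewrite S_INR; lra).
  eapply Rbar_le_trans; [|apply Rbar_mult_Finite_le; [apply exp_pos|apply (opnorm_diag_ge _ m)]].
  apply Rle_trans with (b * exp (- (alpha / s)));
    [|apply (expAinv_negApow_entry_near_peak t alpha m Ht0 Ha Hk)].
  assert (Hsmall : b * (alpha / s) <= eps).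
  { apply Rle_trans with (b * (alpha / S1)); [|unfold S1; right; field; nra].
    apply Rmult_le_compat_l; [lra|]. apply Rmult_le_compat_l; [lra|].
    apply Rinv_le_contravar; lra. }
  pose proof (exp_ineq1_le (- (alpha / s))).
  assert (b * (1 + - (alpha / s)) <= b * exp (- (alpha / s))) by (apply Rmult_le_compat_l; lra).
  lra.
Qed.

Theorem mainTheorem5 :
  (exists S : R -> op,
     is_C0_semigroup S /\ generates Aop DAop S /\
     polynomially_stable Aop DAop S 1) /\
  (forall alpha : R, 0 < alpha ->
     liminf_infty_ge
       (fun t => Rbar_mult (Finite (Rpower t (alpha / 3)))
                           (opnorm (expAinv_negApow t alpha)))
       (/ Rpower 2 (alpha / 2) * Rpower (alpha / (3 * exp 1)) (alpha / 3))).
Proof.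
  split; [|exact expAinv_negApow_liminf].
  exists (diag_exp lam). split; [|split].
  - exact (diag_exp_C0 lam lam_re_nonpos).
  - exact (diag_exp_generates lam lam_re_nonpos).
  - apply (diag_exp_polynomially_stable lam lam_re_nonpos 1 1 1); [lra|lra|].
    intros t n Ht. rewrite Rinv_1, Rpower_Ropp, Rpower_1, Rmult_1_l by lra.
    apply lam_resolvent_decay. lra.
Qed.
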